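(* Consider the drive Hopfield neural network $$\dot{x}=-Cx+Wf(x)+I,\qquad x\in\mathbb{R}^3,$$ and the response Hopfield neural network $$\dot{y}=-\widetilde{C}y+\widetilde{W}f(y)+\lambda g(x(t)),\qquad y\in\mathbb{R}^3,$$ where $x(t)$ is an output (solution) of the drive network, under the standing assumptions listed in the context. Suppose that there is a constant $L>0$ such that $$\|g(x)-g(\overline{x})\|\ge L\|x-\overline{x}\|\quad\text{for all } x,\overline{x}\in\Lambda_x .$$ Then the response network admits sensitivity, i.e., there exist numbers $\widetilde{\epsilon}>0$ and $\widetilde{\Delta}>0$ such that for every $\widetilde{\delta}>0$, every $\alpha_1\in\Lambda_y$ and every chaotic output $x(t)$ of the drive network, there exist $\alpha_2\in\Lambda_y$, a chaotic output $\widetilde{x}(t)$ of the drive network, and an interval $\widetilde{J}\subset[0,\infty)$ of length at least $\widetilde{\Delta}$ such that $\|\alpha_1-\alpha_2\|<\widetilde{\delta}$ and $$\|\varphi_x(t,0,\alpha_1)-\varphi_{\widetilde{x}}(t,0,\alpha_2)\|>\widetilde{\epsilon}\quad\text{for all } t\in\widetilde{J}.$$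
   Context: Norms: Euclidean norm on vectors, spectral norm on $3\times 3$ matrices. For $u=(u_1,u_2,u_3)^T$, $f(u)=(\tanh u_1,\tanh u_2,\tanh u_3)^T$. In the drive network, $C=\mathrm{diag}(c_1,c_2,c_3)$ with $c_i>0$, $W$ is a real $3\times 3$ matrix and $I\in\mathbb{R}^3$. In the response network, $\widetilde{C}=\mathrm{diag}(\widetilde c_1,\widetilde c_2,\widetilde c_3)$ with $\widetilde c_i>0$, $\widetilde{W}$ is a real $3\times3$ matrix, $\lambda$ is a nonzero real constant, and $g=(g_1,g_2,g_3)^T:\mathbb{R}^3\to\mathbb{R}^3$ with each $g_i$ continuous. Standing assumptions: the drive network possesses a chaotic attractor $\mathcal{A}$, and $\Lambda_x\subset\mathbb{R}^3$ is a compact set, invariant under the flow of the drive network, containing $\mathcal{A}$. A solution $x(t)$ of the drive network is called a chaotic output if $x(0)\in\mathcal{A}$. The drive network is sensitive: there exist $\epsilon>0$ and $\Delta>0$ such that for every $\delta>0$ and every chaotic output $x(t)$ there exist a chaotic output $\widetilde{x}(t)$ and an interval $J\subset[0,\infty)$ of length at least $\Delta$ with $\|x(0)-\widetilde{x}(0)\|<\delta$ and $\|x(t)-\widetilde{x}(t)\|>\epsilon$ for all $t\in J$. There is a bounded set $\Lambda_y\subset\mathbb{R}^3$ which is invariant under the flow of the response network for every chaotic output $x(t)$ of the drive network. For an output $x(t)$ of the drive network, $\varphi_x(t,t_0,\alpha)$ denotes the solution of the response network (driven by $x(t)$) with $\varphi_x(t_0,t_0,\alpha)=\alpha$. *)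

From HB Require Import structures.
From mathcomp Require Import all_boot all_order all_algebra.
From mathcomp Require Import all_classical all_reals all_analysis.
Set Implicit Arguments. Unset Strict Implicit. Unset Printing Implicit Defensive.
Import Order.TTheory GRing.Theory Num.Theory.
Import numFieldNormedType.Exports.
Local Open Scope classical_set_scope.
Local Open Scope ring_scope.

Section Defs.
Variable R : realType.

Definition enorm (v : 'cV[R]_3) : R := Num.sqrt (\sum_(i < 3) (v i 0) ^+ 2).

Definition tanhR (u : R) : R := (expR u - expR (- u)) / (expR u + expR (- u)).

Definition factv (v : 'cV[R]_3) : 'cV[R]_3 := \col_i tanhR (v i 0).

Definition drive_sol (c : 'rV[R]_3) (W : 'M[R]_3) (I : 'cV[R]_3)
  (x : R -> 'cV[R]_3) : Prop :=
  forall t : R, is_derive t 1 x (- (diag_mx c *m x t) + W *m factv (x t) + I).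

Definition response_sol (ct : 'rV[R]_3) (Wt : 'M[R]_3) (lam : R)
  (g : 'cV[R]_3 -> 'cV[R]_3) (x : R -> 'cV[R]_3) (y : R -> 'cV[R]_3) : Prop :=
  forall t : R, is_derive t 1 y (- (diag_mx ct *m y t) + Wt *m factv (y t) + lam *: g (x t)).

Definition chaotic_output c W I (A : set 'cV[R]_3) (x : R -> 'cV[R]_3) : Prop :=
  drive_sol c W I x /\ A (x 0).

Definition is_interval (J : set R) : Prop :=
  forall s t u, J s -> J t -> s <= u -> u <= t -> J u.

(* the length (sup J - inf J, possibly infinite) of J is at least D *)
Definition length_ge (J : set R) (D : R) : Prop :=
  forall e, e < D -> exists s t, [/\ J s, J t & e < t - s].

Definition good_interval (J : set R) (D : R) : Prop :=
  [/\ is_interval J, J `<=` [set t | 0 <= t] & length_ge J D].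

End Defs.

(* The response is shown sensitive with alpha2 = alpha1: only the drive output is
   perturbed.  If two chaotic outputs x, x' are eps apart at a time t0, the lower
   Lipschitz bound on g makes some coordinate i of g(x) - g(x') exceed L eps / 3 at
   t0; as g is uniformly continuous on the compact set Lx and the drive has bounded
   speed there, that coordinate stays above L eps / 6 on a window [t0, t0 + h] whose
   length does not depend on the outputs.  The two responses cannot stay e-close on
   the whole window, for then the forcing term lam (g(x) - g(x')) would dominate the
   Lipschitz part of the vector field and move the i-th coordinate of their difference
   by more than 2e.  Once the difference exceeds e, its bounded derivative keeps it
   above e/2 on an interval of fixed length. *)

From HB Require Import structures.
From mathcomp Require Import all_boot all_order all_algebra.
From mathcomp Require Import all_classical all_reals all_analysis.
From mathcomp Require Import ring lra.
Import Order.TTheory GRing.Theory Num.Theory.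
Import numFieldNormedType.Exports.
Local Open Scope classical_set_scope.
Local Open Scope ring_scope.

Section MatrixNorm.
Context {K : realDomainType} {m n : nat}.
Implicit Type A : 'M[K]_(m, n).

Lemma mx_norm_entry_le A i j : `|A i j| <= `|A|.
Proof. by rewrite [leRHS]/Num.Def.normr/= mx_normrE (le_bigmax _ _ (i, j)). Qed.

Lemma mx_norm_le A B : 0 <= B -> (forall i j, `|A i j| <= B) -> `|A| <= B.
Proof.
by move=> B0 AB; rewrite [leLHS]/Num.Def.normr/= mx_normrE bigmax_le // => -[i j].
Qed.

Lemma mx_norm_lt A B : 0 < B -> (forall i j, `|A i j| < B) -> `|A| < B.
Proof.
by move=> B0 AB; rewrite [ltLHS]/Num.Def.normr/= mx_normrE bigmax_lt // => -[i j].
Qed.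

End MatrixNorm.

Section EuclideanNorm.
Context {R : realType}.
Implicit Type v : 'cV[R]_3.

Lemma mx_norm_le_enorm v : `|v| <= enorm v.
Proof.
have sq_ge0 i : 0 <= v i 0 ^+ 2 by rewrite sqr_ge0.
apply: mx_norm_le => [|i j]; first exact: sqrtr_ge0.
rewrite (ord1 j) /enorm -sqrtr_sqr ler_sqrt ?sumr_ge0 //.
by rewrite (bigD1 i) //= lerDl sumr_ge0.
Qed.

Lemma enorm_le_mx_norm v : enorm v <= 3 * `|v|.
Proof.
have v0 : 0 <= 3 * `|v| by rewrite mulr_ge0.
rewrite /enorm -(ger0_norm v0) -sqrtr_sqr ler_sqrt ?sqr_ge0 //.
apply: (@le_trans _ _ (\sum_(i < 3) `|v| ^+ 2)).
  apply: ler_sum => i _; rewrite -real_normK ?num_real //.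
  by rewrite lerXn2r ?nnegrE // mx_norm_entry_le.
by rewrite sumr_const card_ord; nra.
Qed.

End EuclideanNorm.

Section Tanh.
Context {R : realType}.

Lemma tanhRE (u : R) : tanhR u = (expR (u + u) - 1) / (expR (u + u) + 1).
Proof.
rewrite /tanhR expRD expRN; have := expR_gt0 u.
by move=> u0; field; rewrite !gt_eqF //; nra.
Qed.

Lemma tanhR_norm_le1 (u : R) : `|tanhR u| <= 1.
Proof.
rewrite tanhRE; have P0 := expR_gt0 (u + u).
have D0 : 0 < expR (u + u) + 1 by lra.
rewrite normrM normfV (gtr0_norm D0) ler_pdivrMr // mul1r ler_norml.
by apply/andP; split; lra.
Qed.

Lemma tanhR_lipschitz (a b : R) : `|tanhR a - tanhR b| <= 4 * `|a - b|.
Proof.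
rewrite !tanhRE; set P := expR (a + a); set Q := expR (b + b).
have P0 : 0 < P by apply: expR_gt0.
have Q0 : 0 < Q by apply: expR_gt0.
have PQ : P * (1 + ((b + b) - (a + a))) <= Q.
  rewrite (_ : Q = P * expR ((b + b) - (a + a))) ?ler_pM2l ?expR_ge1Dx //.
  by rewrite -expRD; congr expR; ring.
have QP : Q * (1 + ((a + a) - (b + b))) <= P.
  rewrite (_ : P = Q * expR ((a + a) - (b + b))) ?ler_pM2l ?expR_ge1Dx //.
  by rewrite -expRD; congr expR; ring.
have -> : (P - 1) / (P + 1) - (Q - 1) / (Q + 1) = (2 * (P - Q)) / ((P + 1) * (Q + 1)).
  by field; rewrite !gt_eqF //; lra.
set D := (P + 1) * (Q + 1).
have D0 : 0 < D by rewrite mulr_gt0 //; lra.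
rewrite normrM normfV (gtr0_norm D0) ler_pdivrMr //.
have ab := ler_norm (a - b); have ba : b - a <= `|a - b| by rewrite distrC ler_norm.
have PD : P <= D by rewrite /D; nra.
have QD : Q <= D by rewrite /D; nra.
have n0 : 0 <= `|a - b| by [].
rewrite ler_norml; apply/andP; split; nra.
Qed.

End Tanh.

Section HopfieldField.
Context {R : realType}.
Implicit Types (C : 'rV[R]_3) (W : 'M[R]_3) (u v : 'cV[R]_3).

Definition hopfield_field C W u v : 'cV[R]_3 := - (diag_mx C *m v) + W *m factv v + u.

Lemma hopfield_fieldE C W u v k :
  hopfield_field C W u v k 0 =
  - (C 0 k * v k 0) + \sum_j W k j * tanhR (v j 0) + u k 0.
Proof.
rewrite /hopfield_field mul_diag_mx !mxE; congr (_ + _ + _).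
by apply: eq_bigr => j _; rewrite mxE.
Qed.

Lemma hopfield_field_bound C W u v :
  `|hopfield_field C W u v| <= `|C| * `|v| + 3 * `|W| + `|u|.
Proof.
apply: mx_norm_le => [|k l]; first by rewrite !addr_ge0 ?mulr_ge0.
rewrite (ord1 l) hopfield_fieldE.
apply: le_trans (ler_normD _ _) _; apply: lerD; last exact: mx_norm_entry_le.
apply: le_trans (ler_normD _ _) _; apply: lerD.
  by rewrite normrN normrM ler_pM ?mx_norm_entry_le.
apply: le_trans (ler_norm_sum _ _ _) _.
apply: le_trans (_ : \sum_(j < 3) `|W| <= _); last by rewrite sumr_const card_ord mulr_natl.
apply: ler_sum => j _; rewrite normrM -[leRHS]mulr1.
by rewrite ler_pM ?mx_norm_entry_le ?tanhR_norm_le1.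
Qed.

Lemma hopfield_field_lipschitz C W u v1 v2 :
  `|hopfield_field C W u v1 - hopfield_field C W u v2| <= (`|C| + 12 * `|W|) * `|v1 - v2|.
Proof.
apply: mx_norm_le => [|k l]; first by rewrite mulr_ge0 ?addr_ge0 ?mulr_ge0.
have -> : forall A B : 'cV[R]_3, (A - B) k l = A k 0 - B k 0.
  by move=> A B; rewrite (ord1 l) !mxE.
rewrite !hopfield_fieldE.
have -> : - (C 0 k * v1 k 0) + \sum_j W k j * tanhR (v1 j 0) + u k 0 -
    (- (C 0 k * v2 k 0) + \sum_j W k j * tanhR (v2 j 0) + u k 0) =
    - (C 0 k * (v1 - v2) k 0) + \sum_j W k j * (tanhR (v1 j 0) - tanhR (v2 j 0)).
  rewrite !mxE [in RHS](eq_bigr (fun j => W k j * tanhR (v1 j 0) - W k j * tanhR (v2 j 0))).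
    by rewrite sumrB; ring.
  by move=> j _; ring.
rewrite mulrDl; apply: le_trans (ler_normD _ _) _; apply: lerD.
  by rewrite normrN normrM ler_pM ?mx_norm_entry_le.
apply: le_trans (ler_norm_sum _ _ _) _.
apply: le_trans (_ : \sum_(j < 3) `|W| * (4 * `|v1 - v2|) <= _).
  apply: ler_sum => j _; rewrite normrM ler_pM ?mx_norm_entry_le //.
  apply: le_trans (tanhR_lipschitz _ _) _; rewrite ler_pM2l //.
  by have := mx_norm_entry_le (v1 - v2) j 0; rewrite !mxE.
by rewrite sumr_const card_ord -mulr_natr; lra.
Qed.

End HopfieldField.

Section Increments.
Context {R : realType}.

Lemma is_derive_coord {m n : nat} {x : R -> 'M[R]_(m, n)} {t : R} {v : 'M[R]_(m, n)}
  (i : 'I_m) (j : 'I_n) :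
  is_derive t 1 x v -> is_derive t 1 (fun s => x s i j) (v i j).
Proof.
move=> xv; have dx := @ex_derive _ _ _ _ _ _ _ xv.
apply: DeriveDef; first exact: (derivable_mxP _ _ _).1 dx i j.
have := derive_mx dx; rewrite (@derive_val _ _ _ _ _ _ _ xv) => ->.
by rewrite mxE.
Qed.

Lemma MVT_is_derive {f df : R -> R} {a b : R} : a <= b ->
  (forall t : R, is_derive t 1 f (df t)) ->
  exists2 c, a <= c <= b & f b - f a = df c * (b - a).
Proof.
move=> ab fdf.
have cf : {within `[a, b], continuous f}.
  apply: continuous_subspaceT => t.
  exact/differentiable_continuous/derivable1_diffP/(@ex_derive _ _ _ _ _ _ _ (fdf t)).
have [c] := MVT_segment ab (fun t _ => fdf t) cf.
by rewrite in_itv /=; exists c.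
Qed.

Lemma increment_ge_derive {f df : R -> R} {a b m : R} : a <= b ->
  (forall t : R, is_derive t 1 f (df t)) -> (forall t, a <= t <= b -> m <= `|df t|) ->
  m * (b - a) <= `|f b - f a|.
Proof.
move=> ab fdf dfm; have [c cab ->] := MVT_is_derive ab fdf.
by rewrite normrM (ger0_norm (_ : 0 <= b - a)) ?subr_ge0 ?ler_wpM2r ?subr_ge0 ?dfm.
Qed.

Lemma mx_norm_increment_le {m n : nat} {x dx : R -> 'M[R]_(m, n)} {a b B : R} :
  a <= b -> (forall t : R, is_derive t 1 x (dx t)) ->
  (forall t, a <= t <= b -> `|dx t| <= B) -> `|x b - x a| <= B * (b - a).
Proof.
move=> ab xdx dxB; have B0 : 0 <= B by apply: le_trans (dxB a _); rewrite ?lexx.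
apply: mx_norm_le => [|i j]; first by rewrite mulr_ge0 ?subr_ge0.
rewrite !mxE; have [c cab ->] := MVT_is_derive ab (fun t => is_derive_coord i j (xdx t)).
rewrite normrM (ger0_norm (_ : 0 <= b - a)) ?subr_ge0 ?ler_wpM2r ?subr_ge0 //.
exact: le_trans (mx_norm_entry_le _ i j) (dxB c cab).
Qed.

End Increments.

Section Compactness.
Context {R : realType}.

Lemma continuous_mx_coord {T : topologicalType} {m n : nat} {f : T -> 'M[R]_(m, n)} :
  (forall i j, continuous (fun t => f t i j)) -> continuous f.
Proof.
move=> fc t; apply/cvgrPdist_lt => e e0.
have near_coord (ij : 'I_m * 'I_n) : \forall s \near t, `|f t ij.1 ij.2 - f s ij.1 ij.2| < e.
  by move: (fc ij.1 ij.2 t) => /cvgrPdist_lt; apply.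
apply: filterS (@filter_forall _ _ _ _ _ near_coord) => s fs.
by apply: mx_norm_lt => // i j; rewrite !mxE; exact: (fs (i, j)).
Qed.

Lemma compact_norm_bound {V : normedModType R} {K : set V} : compact K ->
  exists2 B, 0 < B & forall v, K v -> `|v| <= B.
Proof.
move=> /compact_bounded[M [_ HM]]; exists (`|M| + 1); first by rewrite ltr_wpDl.
by move=> v Kv; apply: HM => //; rewrite (le_lt_trans (ler_norm M)) // ltrDl.
Qed.

Lemma compact_unif_continuous {V W : normedModType R} {K : set V} {f : V -> W} :
  compact K -> continuous f -> forall e, 0 < e -> exists2 d, 0 < d &
    forall u v, K u -> K v -> `|u - v| < d -> `|f u - f v| < e.
Proof.
move=> cK fc e e0.
have : \forall d \near (0:R)^'+, K `<=`
    (fun u => forall v, K v -> `|u - v| < d -> `|f u - f v| < e).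
  apply: ((compact_near_coveringP K).1 cK R ((0:R)^'+)
    (fun d u => forall v, K v -> `|u - v| < d -> `|f u - f v| < e)) => x Kx.
  have [r /= r0 fxr] : exists2 r, 0 < r & forall y, `|x - y| < r -> `|f x - f y| < e / 2.
    have /cvgrPdist_lt/(_ (e / 2))/(_ _)/nbhs_ballP[] := fc x; first by rewrite divr_gt0.
    by move=> r r0 fr; exists r => // y xy; apply: fr; rewrite -ball_normE.
  near=> y d => /= v Kv yv.
  have xy : `|x - y| < r / 2.
    by near: y; apply/nbhs_ballP; exists (r / 2) => /= [|w]; rewrite ?divr_gt0 -?ball_normE.
  have dr : d < r / 2 by near: d; apply: nbhs_right_lt; rewrite divr_gt0.
  have xv : `|x - v| < r.
    by have := ler_normD (x - y) (y - v); rewrite addrA subrK; lra.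
  have yr : `|x - y| < r by lra.
  have := ler_normD (f y - f x) (f x - f v); rewrite addrA subrK [`|f y - f x|]distrC.
  by have := fxr _ xv; have := fxr _ yr; lra.
move=> Kd; near (0:R)^'+ => d.
exists d; first by near: d; exact: nbhs_right_gt.
by move=> u v Ku Kv; move: u Ku v Kv; near: d.
Unshelve. all: by end_near.
Qed.

End Compactness.

Section Persistence.
Context {R : realType}.

Lemma mx_norm_gt_persists {m n : nat} {z dz : R -> 'M[R]_(m, n)} {B e t1 : R} :
  0 < B -> (forall t : R, is_derive t 1 z (dz t)) -> (forall t, t1 <= t -> `|dz t| <= B) ->
  e < `|z t1| -> forall t, t1 <= t <= t1 + e / (2 * B) -> e / 2 < `|z t|.
Proof.
move=> B0 zdz dzB ez t /andP[t1t tD].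
have drift : `|z t - z t1| <= B * (t - t1).
  by apply: mx_norm_increment_le t1t zdz _ => s /andP[+ _]; apply: dzB.
have : B * (t - t1) <= B * (e / (2 * B)) by apply: ler_wpM2l; [exact: ltW | lra].
rewrite (_ : B * (e / (2 * B)) = e / 2); last by field; rewrite gt_eqF.
have := lerB_normD (z t1) (z t - z t1); rewrite [z t1 + _]addrC subrK; lra.
Qed.

Lemma segment_good_interval (a D : R) : 0 <= a -> 0 <= D ->
  good_interval [set t | a <= t <= a + D] D.
Proof.
move=> a0 D0; split => [s u w /andP[s1 _] /andP[_ u2] sw wu | s /andP[s1 _] | e eD].
- by apply/andP; split; lra.
- by rewrite /=; lra.
- by exists a, (a + D); split => /=; apply/andP || lra; split; lra.
Qed.

End Persistence.

Section ResponseSeparation.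
Context {R : realType}.
Variables (c : 'rV[R]_3) (W : 'M[R]_3) (I : 'cV[R]_3).
Variables (ct : 'rV[R]_3) (Wt : 'M[R]_3) (lam : R) (g : 'cV[R]_3 -> 'cV[R]_3).
Variables (Lx : set 'cV[R]_3) (M : R).
Hypotheses (cLx : compact Lx) (gc : continuous g).

Definition drive_response_pair (x y : R -> 'cV[R]_3) :=
  [/\ drive_sol c W I x, forall t, 0 <= t -> Lx (x t),
      response_sol ct Wt lam g x y & forall t, 0 <= t -> enorm (y t) <= M].

Lemma drive_lipschitz_in_time : exists2 B, 0 < B & forall x,
  drive_sol c W I x -> (forall t, 0 <= t -> Lx (x t)) ->
  forall s t, 0 <= s <= t -> `|x t - x s| <= B * (t - s).
Proof.
have [BX BX0 LxBX] := compact_norm_bound cLx.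
exists (`|c| * BX + 3 * `|W| + `|I| + 1) => [|x dx xLx s t /andP[s0 st]].
  by rewrite ltr_pwDr // !addr_ge0 ?mulr_ge0 // ltW.
have dxF : forall t : R, is_derive t 1 x (hopfield_field c W I (x t)) := dx.
apply: mx_norm_increment_le st dxF _.
move=> r /andP[sr _]; apply: le_trans (hopfield_field_bound _ _ _ _) _.
have xrBX : `|x r| <= BX by apply/LxBX/xLx; lra.
have : `|c| * `|x r| <= `|c| * BX by rewrite ler_wpM2l.
lra.
Qed.

Lemma forcing_slowly_varying e : 0 < e -> exists2 h, 0 < h & forall x,
  drive_sol c W I x -> (forall t, 0 <= t -> Lx (x t)) ->
  forall t0 t, 0 <= t0 -> t0 <= t <= t0 + h -> `|g (x t) - g (x t0)| < e.
Proof.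
move=> e0; have [d d0 gd] := compact_unif_continuous cLx gc _ e0.
have [B B0 xB] := drive_lipschitz_in_time.
exists (d / (2 * B)) => [|x dx xLx t0 t t00 /andP[t0t tt0]].
  by rewrite divr_gt0 ?mulr_gt0.
apply: gd; [apply: xLx; lra | exact: xLx |].
apply: le_lt_trans (xB x dx xLx t0 t _) _; first by rewrite t00.
have : B * (t - t0) <= B * (d / (2 * B)) by apply: ler_wpM2l; [exact: ltW | lra].
rewrite (_ : B * (d / (2 * B)) = d / 2); last by field; rewrite gt_eqF.
lra.
Qed.

Lemma response_field_bounded : exists2 B, 0 < B & forall u y,
  Lx u -> enorm y <= M -> `|hopfield_field ct Wt (lam *: g u) y| <= B.
Proof.
have [G G0 LxG] : exists2 G, 0 < G & forall u, Lx u -> `|g u| <= G.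
  have [G G0 gG] := compact_norm_bound (continuous_compact (continuous_subspaceT gc) cLx).
  by exists G => // u Lu; apply: gG; exists u.
exists (`|ct| * `|M| + 3 * `|Wt| + `|lam| * G + 1) => [|u y Lu yM].
  by rewrite ltr_pwDr // !addr_ge0 ?mulr_ge0 // ltW.
apply: le_trans (hopfield_field_bound _ _ _ _) _; rewrite normrZ.
have yM' : `|y| <= `|M|.
  exact: le_trans (mx_norm_le_enorm y) (le_trans yM (ler_norm M)).
have : `|ct| * `|y| <= `|ct| * `|M| by rewrite ler_wpM2l.
have : `|lam| * `|g u| <= `|lam| * G by rewrite ler_wpM2l ?LxG.
lra.
Qed.

Lemma response_gap_escapes {x1 x2 y1 y2 : R -> 'cV[R]_3} {i : 'I_3} {t0 h e k : R} :
  response_sol ct Wt lam g x1 y1 -> response_sol ct Wt lam g x2 y2 -> 0 < h ->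
  (`|ct| + 12 * `|Wt|) * e <= `|lam| * k / 2 -> 4 * e < `|lam| * k * h ->
  (forall t, t0 <= t <= t0 + h -> k <= `|g (x1 t) i 0 - g (x2 t) i 0|) ->
  exists2 t1, t0 <= t1 <= t0 + h & e < `|y1 t1 - y2 t1|.
Proof.
move=> dy1 dy2 h0 eCW eh gk; apply: contrapT => noescape.
(* Otherwise the i-th coordinate of y1 - y2 drifts by at least |lam| k h / 2 > 2 e. *)
have small t : t0 <= t <= t0 + h -> `|y1 t - y2 t| <= e.
  by move=> tI; rewrite leNgt; apply/negP => et; apply: noescape; exists t.
have small_i t : t0 <= t <= t0 + h -> `|(y1 t - y2 t) i 0| <= e.
  by move=> /small; apply: le_trans (mx_norm_entry_le _ _ _).
pose F (x y : R -> 'cV[R]_3) t := hopfield_field ct Wt (lam *: g (x t)) (y t).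
have dz (t : R) : is_derive t 1 (fun s => (y1 s - y2 s) i 0) ((F x1 y1 t - F x2 y2 t) i 0).
  exact: is_derive_coord (is_deriveB (dy1 t) (dy2 t)).
have dz_ge t : t0 <= t <= t0 + h -> `|lam| * k / 2 <= `|(F x1 y1 t - F x2 y2 t) i 0|.
  move=> tI; set A := hopfield_field ct Wt (lam *: g (x1 t)) (y1 t) -
                      hopfield_field ct Wt (lam *: g (x1 t)) (y2 t).
  have -> : (F x1 y1 t - F x2 y2 t) i 0 = A i 0 + lam * (g (x1 t) i 0 - g (x2 t) i 0).
    by rewrite /F /A /hopfield_field !mxE; ring.
  have A_le : `|A i 0| <= `|lam| * k / 2.
    apply: le_trans (mx_norm_entry_le _ _ _) _.
    apply: le_trans (hopfield_field_lipschitz _ _ _ _ _) _.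
    by apply: le_trans eCW; rewrite ler_wpM2l ?small // addr_ge0 ?mulr_ge0.
  have lam_ge : `|lam| * k <= `|lam * (g (x1 t) i 0 - g (x2 t) i 0)|.
    by rewrite normrM ler_wpM2l ?gk.
  by have := lerB_normD (lam * (g (x1 t) i 0 - g (x2 t) i 0)) (A i 0); rewrite addrC; lra.
have t0h : t0 <= t0 + h by lra.
have := increment_ge_derive t0h dz dz_ge.
rewrite (_ : t0 + h - t0 = h); last by ring.
have := ler_normB ((y1 (t0 + h) - y2 (t0 + h)) i 0) ((y1 t0 - y2 t0) i 0).
have := small_i (t0 + h) _; have := small_i t0 _.
rewrite !lexx t0h /=; nra.
Qed.

Variable L : R.
Hypotheses (L0 : 0 < L)
  (g_expanding : forall u v, Lx u -> Lx v -> L * enorm (u - v) <= enorm (g u - g v)).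

Lemma forcing_gap_persists eps : 0 < eps -> exists2 h, 0 < h & forall x1 x2 t0,
  drive_sol c W I x1 -> drive_sol c W I x2 ->
  (forall t, 0 <= t -> Lx (x1 t)) -> (forall t, 0 <= t -> Lx (x2 t)) ->
  0 <= t0 -> eps < enorm (x1 t0 - x2 t0) ->
  exists i, forall t, t0 <= t <= t0 + h -> L * eps / 6 <= `|g (x1 t) i 0 - g (x2 t) i 0|.
Proof.
move=> eps0; have kap0 : 0 < L * eps / 3 by rewrite divr_gt0 ?mulr_gt0.
have kap4 : 0 < L * eps / 3 / 4 by rewrite divr_gt0.
have [h h0 slow] := forcing_slowly_varying _ kap4.
exists h => [|x1 x2 t0 dx1 dx2 Lx1 Lx2 t00 sep]; first by [].
have gap0 : L * eps / 3 < `|g (x1 t0) - g (x2 t0)|.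
  have := g_expanding _ _ (Lx1 _ t00) (Lx2 _ t00).
  have := enorm_le_mx_norm (g (x1 t0) - g (x2 t0)).
  have : L * eps < L * enorm (x1 t0 - x2 t0) by rewrite ltr_pM2l.
  lra.
have [i gap0_i] : exists i, L * eps / 3 < `|g (x1 t0) i 0 - g (x2 t0) i 0|.
  apply: contrapT => /forallNP small; move: gap0; apply/negP; rewrite -leNgt.
  apply: mx_norm_le => [|k j]; first exact: ltW.
  by rewrite (ord1 j) !mxE leNgt; apply/negP/small.
exists i => t tI.
have move1 := le_lt_trans (mx_norm_entry_le _ i 0) (slow x1 dx1 Lx1 t0 t t00 tI).
have move2 := le_lt_trans (mx_norm_entry_le _ i 0) (slow x2 dx2 Lx2 t0 t t00 tI).
rewrite !mxE in move1 move2.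
set a := g (x1 t) i 0 - g (x1 t0) i 0 in move1.
set b := g (x2 t) i 0 - g (x2 t0) i 0 in move2.
have -> : g (x1 t) i 0 - g (x2 t) i 0 = (g (x1 t0) i 0 - g (x2 t0) i 0) + (a - b).
  by rewrite /a /b; ring.
by have := lerB_normD (g (x1 t0) i 0 - g (x2 t0) i 0) (a - b); have := ler_normB a b; lra.
Qed.

Hypothesis lam0 : lam != 0.

Lemma response_separation eps : 0 < eps -> exists e D, [/\ 0 < e, 0 < D &
  forall x1 x2 y1 y2 t0, drive_response_pair x1 y1 -> drive_response_pair x2 y2 ->
  0 <= t0 -> eps < enorm (x1 t0 - x2 t0) ->
  exists J, good_interval J D /\ forall t, J t -> e < enorm (y1 t - y2 t)].
Proof.
move=> eps0; have [h h0 forcing_gap] := forcing_gap_persists _ eps0.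
have [B B0 FB] := response_field_bounded.
set k := L * eps / 6; set CW := `|ct| + 12 * `|Wt|.
have k0 : 0 < k by rewrite divr_gt0 ?mulr_gt0.
have CW0 : 0 <= CW by rewrite addr_ge0 ?mulr_ge0.
have lamk0 : 0 < `|lam| * k / 2 by rewrite divr_gt0 ?mulr_gt0 ?normr_gt0.
(* the two smallness conditions of [response_gap_escapes] *)
set e := `|lam| * k / 2 * Num.min (CW + 1)^-1 (h / 4).
have min0 : 0 < Num.min (CW + 1)^-1 (h / 4) by rewrite lt_min invr_gt0 divr_gt0 //; lra.
have e0 : 0 < e by rewrite mulr_gt0.
have eCW : CW * e <= `|lam| * k / 2.
  have : (CW + 1) * Num.min (CW + 1)^-1 (h / 4) <= 1.
    by rewrite -ler_pdivlMl ?ge_min ?lexx ?mulr1 //; lra.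
  rewrite /e; nra.
have eh : 4 * e < `|lam| * k * h.
  have : Num.min (CW + 1)^-1 (h / 4) <= h / 4 by rewrite ge_min lexx orbT.
  rewrite /e; nra.
have D0 : 0 < e / (2 * (2 * B)) by rewrite divr_gt0 // !mulr_gt0.
exists (e / 2), (e / (2 * (2 * B))); split => // [|x1 x2 y1 y2 t0].
  by rewrite divr_gt0.
move=> [dx1 Lx1 dy1 yM1] [dx2 Lx2 dy2 yM2] t00 sep.
have [i gap_i] := forcing_gap x1 x2 t0 dx1 dx2 Lx1 Lx2 t00 sep.
have [t1 /andP[t0t1 _] escape] := response_gap_escapes dy1 dy2 h0 eCW eh gap_i.
exists [set t | t1 <= t <= t1 + e / (2 * (2 * B))]; split.
  by apply: segment_good_interval; [lra | exact: ltW].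
move=> t tJ; apply: lt_le_trans (mx_norm_le_enorm _).
have dz (s : R) : is_derive s 1 (fun r => y1 r - y2 r)
    (hopfield_field ct Wt (lam *: g (x1 s)) (y1 s) -
     hopfield_field ct Wt (lam *: g (x2 s)) (y2 s)).
  exact: is_deriveB (dy1 s) (dy2 s).
apply: mx_norm_gt_persists (mulr_gt0 _ B0) dz _ escape t tJ => // s t1s.
have s0 : 0 <= s by lra.
have := FB _ _ (Lx1 _ s0) (yM1 _ s0); have := FB _ _ (Lx2 _ s0) (yM2 _ s0).
by have := ler_normB (hopfield_field ct Wt (lam *: g (x1 s)) (y1 s))
  (hopfield_field ct Wt (lam *: g (x2 s)) (y2 s)); lra.
Qed.

End ResponseSeparation.

Theorem theorem2 (R : realType)
  (c : 'rV[R]_3) (W : 'M[R]_3) (I : 'cV[R]_3)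
  (ct : 'rV[R]_3) (Wt : 'M[R]_3) (lam : R) (g : 'cV[R]_3 -> 'cV[R]_3)
  (A Lx Ly : set 'cV[R]_3)
  (phi : (R -> 'cV[R]_3) -> R -> R -> 'cV[R]_3 -> 'cV[R]_3) :
  (* drive network parameters *)
  (forall i, 0 < c 0 i) ->
  (* response network parameters *)
  (forall i, 0 < ct 0 i) -> lam != 0 ->
  (forall i, continuous (fun v => g v i 0)) ->
  (* the chaotic attractor A: nonempty, invariant, contained in Lx *)
  A !=set0 ->
  (forall x, drive_sol c W I x -> A (x 0) -> forall t, 0 <= t -> A (x t)) ->
  A `<=` Lx ->
  (* Lx compact and invariant under the drive flow *)
  compact Lx ->
  (forall x, drive_sol c W I x -> Lx (x 0) -> forall t, 0 <= t -> Lx (x t)) ->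
  (* sensitivity of the drive network *)
  (exists eps Delta, [/\ 0 < eps, 0 < Delta &
     forall delta, 0 < delta -> forall x, chaotic_output c W I A x ->
       exists xt J, [/\ chaotic_output c W I A xt, good_interval J Delta,
         enorm (x 0 - xt 0) < delta &
         forall t, J t -> eps < enorm (x t - xt t)]]) ->
  (* phi_x(t, t0, alpha): the solution of the response network driven by x
     with phi_x(t0, t0, alpha) = alpha *)
  (forall x, chaotic_output c W I A x -> forall t0 alpha,
     phi x t0 t0 alpha = alpha /\
     response_sol ct Wt lam g x (fun t => phi x t t0 alpha)) ->
  (* Ly bounded and invariant under the response flow for every chaotic output *)
  (exists M, forall y, Ly y -> enorm y <= M) ->
  (forall x, chaotic_output c W I A x -> forall t0 alpha, Ly alpha ->
     forall t, t0 <= t -> Ly (phi x t t0 alpha)) ->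
  (* lower Lipschitz condition on g over Lx *)
  (exists L, 0 < L /\
     forall x xb, Lx x -> Lx xb -> L * enorm (x - xb) <= enorm (g x - g xb)) ->
  (* conclusion: sensitivity of the response network *)
  exists epst Deltat, [/\ 0 < epst, 0 < Deltat &
    forall deltat, 0 < deltat -> forall alpha1, Ly alpha1 ->
    forall x, chaotic_output c W I A x ->
      exists alpha2 xt J, [/\ Ly alpha2, chaotic_output c W I A xt,
        good_interval J Deltat, enorm (alpha1 - alpha2) < deltat &
        forall t, J t -> epst < enorm (phi x t 0 alpha1 - phi xt t 0 alpha2)]].
Proof.
move=> _ _ lam0 g_cont _ _ ALx cLx Lx_inv [eps [Delta [eps0 Delta0 drive_sensitive]]]
  phiP [M LyM] Ly_inv [L [L0 g_expanding]].
have g_continuous : continuous g.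
  by apply: continuous_mx_coord => i j; rewrite (ord1 j); exact: g_cont.
have [e [D [e0 D0 separation]]] := response_separation c W I ct Wt lam g Lx M
  cLx g_continuous _ L0 g_expanding lam0 _ eps0.
exists e, D; split => // delta delta0 alpha Ly_alpha x x_chaotic.
(* any delta will do, since the response is not perturbed initially *)
have [xt [J [xt_chaotic [_ J_pos J_long] _ x_xt_sep]]] := drive_sensitive 1 ltr01 x x_chaotic.
have [t0 [_ [J_t0 _ _]]] := J_long 0 Delta0.
have pair z : chaotic_output c W I A z ->
    drive_response_pair c W I ct Wt lam g Lx M z (fun t => phi z t 0 alpha).
  move=> [dz Az0]; split => //; first exact: Lx_inv dz (ALx _ Az0).
    exact: (phiP z (conj dz Az0) 0 alpha).2.
  by move=> t t_ge0; apply/LyM/Ly_inv.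
have [J' [J'_good J'_sep]] := separation x xt _ _ t0
  (pair x x_chaotic) (pair xt xt_chaotic) (J_pos _ J_t0) (x_xt_sep _ J_t0).
exists alpha, xt, J'; split => //.
by rewrite subrr (le_lt_trans (enorm_le_mx_norm 0)) // normr0 mulr0.
Qed.
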